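(* Let $R$ be a von Neumann regular ring with identity, $G$ a group, and $\alpha: G\to\mathrm{Aut}(R)$ an action such that $1$ is the only element $g\in G$ for which $\alpha(g)$ is corner-inner. Then the skew group ring $R*_{\alpha}G$ is simple if and only if $R$ is $G$-simple.
   Context: For $g\in G$, $r\in R$ write ${}^g r=\alpha(g)(r)$. The skew group ring $R*_{\alpha}G$ is the free left $R$-module with basis $G$, with multiplication determined by those of $R$ and $G$ and $g r={}^g r\, g$, extended linearly. An ideal $I$ of $R$ is $G$-invariant if ${}^gI\subseteq I$ for all $g\in G$; $R$ is $G$-simple if $R\ne 0$ and its only $G$-invariant ideals are $0$ and $R$. An automorphism $f$ of $R$ is corner-inner if there exist a nonzero idempotent $e\in R$ and, setting $e'=f^{-1}(e)$, elements $u\in eRe'$ and $v\in e'Re$ such that $uv=e$, $vu=e'$, $f(x)=uxv$ for all $x\in e'Re'$, and $f^{-1}(y)=vyu$ for all $y\in eRe$. *)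

From HB Require Import structures.
From mathcomp Require Import all_boot all_order all_algebra.
From mathcomp Require Import finmap.
Set Implicit Arguments. Unset Strict Implicit. Unset Printing Implicit Defensive.
Import GRing.Theory.
Local Open Scope ring_scope.


Definition von_neumann_regular (R : pzRingType) : Prop :=
  forall a : R, exists x : R, a = a * x * a.

Definition is_ideal (R : pzRingType) (I : R -> Prop) : Prop :=
  [/\ I 0,
      (forall x y, I x -> I y -> I (x + y)),
      (forall x, I x -> I (- x)),
      (forall r x, I x -> I (r * x)) &
      (forall r x, I x -> I (x * r))].

Definition is_zero_ideal (R : pzRingType) (I : R -> Prop) : Prop :=
  forall x, I x <-> x = 0.
Definition is_full_ideal (R : pzRingType) (I : R -> Prop) : Prop :=
  forall x, I x.

Definition is_action (G : groupType) (R : pzRingType)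
    (alpha : G -> {rmorphism R -> R}) : Prop :=
  [/\ (forall g, bijective (alpha g)),
      (forall x, alpha 1%g x = x) &
      (forall g h x, alpha (g * h)%g x = alpha g (alpha h x))].

Definition G_invariant (G : groupType) (R : pzRingType)
    (alpha : G -> {rmorphism R -> R}) (I : R -> Prop) : Prop :=
  forall g x, I x -> I (alpha g x).

Definition G_simple (G : groupType) (R : pzRingType)
    (alpha : G -> {rmorphism R -> R}) : Prop :=
  (1 : R) != 0 /\
  forall I : R -> Prop, is_ideal I -> G_invariant alpha I ->
    is_zero_ideal I \/ is_full_ideal I.

Definition corner_inner (R : pzRingType) (f : R -> R) : Prop :=
  exists finv : R -> R, [/\ cancel f finv, cancel finv f &
  exists e : R, [/\ e * e = e, e != 0 &
    let e' := finv e in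
    exists u v : R,
      [/\ (exists r, u = e * r * e'),
          (exists r, v = e' * r * e),
          u * v = e /\ v * u = e',
          (forall x, (exists r, x = e' * r * e') -> f x = u * x * v) &
          (forall y, (exists r, y = e * r * e) -> finv y = v * y * u)]]].

(** Elements of R *_alpha G: finitely supported functions G -> R,
    i.e. the formal sums  sum_g r_g g  (r_g = the value at g). *)
Definition skew (G : groupType) (R : pzRingType) := {fsfun G -> R with 0}.

Section Skew.
Variables (G : groupType) (R : pzRingType) (alpha : G -> {rmorphism R -> R}).

Definition skew_zero : skew G R := [fsfun].

Definition skew_one : skew G R := [fsfun k in [fset (1%g : G)]%fset => (1 : R)].

Definition skew_add (a b : skew G R) : skew G R :=
  [fsfun k in (finsupp a `|` finsupp b)%fset => a k + b k].

Definition skew_opp (a : skew G R) : skew G R :=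
  [fsfun k in finsupp a => - a k].

(** (sum_g a_g g)(sum_h b_h h) = sum_{g,h} a_g (alpha g b_h) (g h):
    the coefficient at k is  sum_g a_g * alpha g (b_{g^-1 k}). *)
Definition skew_mul (a b : skew G R) : skew G R :=
  [fsfun k in [fset (g * h)%g | g in finsupp a, h in finsupp b]%fset =>
     \sum_(g <- finsupp a) a g * alpha g (b (g^-1 * k)%g)].

Definition skew_is_ideal (I : skew G R -> Prop) : Prop :=
  [/\ I skew_zero,
      (forall x y, I x -> I y -> I (skew_add x y)),
      (forall x, I x -> I (skew_opp x)),
      (forall r x, I x -> I (skew_mul r x)) &
      (forall r x, I x -> I (skew_mul x r))].

Definition skew_simple : Prop :=
  skew_one != skew_zero /\
  forall I : skew G R -> Prop, skew_is_ideal I ->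
    (forall x, I x <-> x = skew_zero) \/ (forall x, I x).

End Skew.

(* A G-invariant ideal I of R gives the ideal of R *_alpha G of elements with
   all coefficients in I, which settles one direction.  Conversely, every
   nonzero ideal J of R *_alpha G meets R nontrivially.  Take a in J of minimal
   support and, by regularity, multiply it on the left so that its coefficient
   at some h is an idempotent e with e a_k = a_k for all k.  For x in eRe the
   twisted commutator (x 1) a - a (alpha_{h^-1}(x) 1) lies in J and has no
   h-coefficient, so by minimality it vanishes: each a_k intertwines eRe with
   alpha_{k h^-1}, i.e. x a_k = a_k alpha_{k h^-1}(x).  Using regularity once
   more, a nonzero intertwiner u yields the corner idempotent u w and exhibits
   alpha_{h k^-1} as corner-inner, so a_k = 0 for k <> h.  Hence a = e h and
   e = a h^-1 lies in J, so J meets R in a nonzero G-invariant ideal, which is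
   all of R when R is G-simple. *)

From mathcomp Require Import all_boot all_order all_algebra.
From mathcomp Require Import finmap.
From Stdlib Require Import Classical.

Set Implicit Arguments. Unset Strict Implicit. Unset Printing Implicit Defensive.
Import GRing.Theory.
Local Open Scope ring_scope.

Section SkewCoefficients.
Variables (G : groupType) (R : pzRingType) (alpha : G -> {rmorphism R -> R}).
Implicit Types (a b : skew G R) (s t : R) (g h k : G).

Definition skew_monom s g : skew G R := [fsfun k in [fset g]%fset => s].

Lemma skew_monomE s g k : skew_monom s g k = if k == g then s else 0.
Proof. by rewrite fsfunE inE. Qed.

Lemma skew_zeroE k : skew_zero G R k = 0.
Proof. by rewrite fsfunE. Qed.

Lemma skew_addE a b k : skew_add a b k = a k + b k.
Proof.
rewrite fsfunE; case: ifP => //; rewrite inE => /norP[].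
by rewrite !memNfinsupp => /eqP -> /eqP ->; rewrite addr0.
Qed.

Lemma skew_oppE a k : skew_opp a k = - a k.
Proof. by rewrite fsfunE; case: finsuppP => //; rewrite oppr0. Qed.

Lemma skew_mulE a b k :
  skew_mul alpha a b k = \sum_(g <- finsupp a) a g * alpha g (b (g^-1 * k)%g).
Proof.
rewrite fsfunE; case: ifP => // kNab; rewrite big_seq big1 // => g ga.
case: (finsuppP b) => [|bk]; first by rewrite rmorph0 mulr0.
by move: kNab; rewrite -[k in k \in _](mulVKg g k) in_imfset2.
Qed.

Lemma skew_mulE_sub a b k (S : {fset G}) : (finsupp a `<=` S)%fset ->
  skew_mul alpha a b k = \sum_(g <- S) a g * alpha g (b (g^-1 * k)%g).
Proof.
move=> aS; rewrite skew_mulE (big_fset_incl _ aS) // => g _ /fsfun_dflt ->.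
by rewrite mul0r.
Qed.

Lemma skew_mul_monoml s g b k :
  skew_mul alpha (skew_monom s g) b k = s * alpha g (b (g^-1 * k)%g).
Proof.
have sub : (finsupp (skew_monom s g) `<=` [fset g])%fset.
  apply/fsubsetP => x; rewrite mem_finsupp skew_monomE inE.
  by case: (x == g); rewrite ?eqxx.
by rewrite (skew_mulE_sub _ _ sub) big_seq_fset1 skew_monomE eqxx.
Qed.

Lemma skew_mul_monomr b t h k :
  skew_mul alpha b (skew_monom t h) k = b (k * h^-1)%g * alpha (k * h^-1)%g t.
Proof.
rewrite (@skew_mulE_sub _ _ _ (((k * h^-1)%g |` finsupp b)%fset)) ?fsubsetU1 //.
rewrite (bigD1_seq (k * h^-1)%g) ?fset_uniq ?fset1U1 //= skew_monomE.
rewrite invgM invgK mulgVK eqxx big1 ?addr0 // => g /negPf gNkh.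
rewrite skew_monomE; case: eqP => [gk|]; last by rewrite rmorph0 mulr0.
by rewrite -gk invgM invgK mulVKg eqxx in gNkh.
Qed.

Lemma skew_mul_monom s g t h :
  skew_mul alpha (skew_monom s g) (skew_monom t h) =
  skew_monom (s * alpha g t) (g * h)%g.
Proof.
apply/fsfunP => k; rewrite skew_mul_monoml !skew_monomE.
have -> : (g^-1 * k == h)%g = (k == g * h)%g.
  by apply/eqP/eqP => [<-|->]; rewrite ?mulVKg ?mulKg.
by case: ifP; rewrite ?rmorph0 ?mulr0.
Qed.

Lemma skew_monom0 g : skew_monom 0 g = skew_zero G R.
Proof. by apply/fsfunP => k; rewrite skew_monomE skew_zeroE if_same. Qed.

Lemma skew_monom_eq0 s g : (skew_monom s g == skew_zero G R) = (s == 0).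
Proof.
apply/eqP/eqP => [/fsfunP/(_ g)|->]; last exact: skew_monom0.
by rewrite skew_monomE eqxx skew_zeroE.
Qed.

Lemma skew_mulr1 a : skew_mul alpha a (skew_one G R) = a.
Proof.
by apply/fsfunP => k; rewrite skew_mul_monomr invg1 mulg1 rmorph1 mulr1.
Qed.

End SkewCoefficients.

Section CornerInner.
Variables (R : pzRingType) (f finv : {rmorphism R -> R}).
Hypotheses (fK : cancel f finv) (finvK : cancel finv f).

Lemma corner_inner_of_intertwiner u w :
  u != 0 -> u * w * u = u ->
  (forall x, x = u * w * x * (u * w) -> x * u = u * f x) -> corner_inner finv.
Proof.
move=> u_neq0 uwu intertwine.
have [p pE] : {p | p = u * w} by exists (u * w).
rewrite -pE in intertwine.
have pu : p * u = u by rewrite pE uwu.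
have pp : p * p = p by rewrite pE mulrA uwu.
have p_neq0 : p != 0 by apply: contraNneq u_neq0 => p0; rewrite -pu p0 mul0r.
pose q := f p.
have uq : u * q = u by rewrite -(intertwine p) ?pu // !pp.
have qq : q * q = q by rewrite -rmorphM pp.
have finvE y : y = q * y * q -> finv y = u * y * w.
  move=> yE; have xE : finv y = p * finv y * p by rewrite {1}yE !rmorphM fK.
  have xp : finv y * p = finv y by rewrite xE -!mulrA pp.
  by rewrite -xp pE mulrA intertwine // finvK.
have qwu : q * w * u = q.
  apply: (can_inj finvK); rewrite fK finvE; last first.
    by rewrite !mulrA qq -!mulrA uq.
  by rewrite !mulrA uq uwu pE.
exists f; split=> //; exists p; split=> //=.
exists u, (q * w * p); split.
- by exists u; rewrite pu uq.
- by exists w.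
- by split; [rewrite !mulrA uq -pE pp | rewrite -mulrA pu qwu].
- move=> x [r xE]; have xq : x * q = x by rewrite xE -!mulrA qq.
  have pxp : finv x * p = finv x by rewrite xE !rmorphM fK -!mulrA pp.
  by rewrite !mulrA -(mulrA u x) xq -finvE ?pxp // xE !mulrA qq -!mulrA qq.
- move=> y [r yE]; have py : p * y = y by rewrite yE !mulrA pp.
  rewrite -(mulrA _ p y) py -mulrA intertwine; last first.
    by rewrite yE !mulrA pp -!mulrA pp.
  by rewrite !mulrA qwu -rmorphM py.
Qed.

Lemma corner_inner_of_corner_intertwiner e u :
  von_neumann_regular R -> e * e = e -> u != 0 -> e * u = u ->
  (forall x, x = e * x * e -> x * u = u * f x) -> corner_inner finv.
Proof.
move=> regR ee u_neq0 eu intertwine; have [w uwu] := regR u.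
apply: (@corner_inner_of_intertwiner u (w * e)) => // [|x xE].
  by rewrite -!mulrA eu mulrA -uwu.
have ex : e * x = x by rewrite xE !mulrA eu.
have xe : x * e = x by rewrite xE -!mulrA ee.
by apply: intertwine; rewrite ex xe.
Qed.

End CornerInner.

Section Action.
Variables (G : groupType) (R : pzRingType) (alpha : G -> {rmorphism R -> R}).
Hypothesis act : is_action alpha.

Lemma action1 x : alpha 1%g x = x.
Proof. by case: act. Qed.

Lemma actionM g h x : alpha (g * h)%g x = alpha g (alpha h x).
Proof. by case: act. Qed.

Lemma actionK g : cancel (alpha g) (alpha g^-1).
Proof. by move=> x; rewrite -actionM mulVg action1. Qed.

Lemma actionVK g : cancel (alpha g^-1) (alpha g).
Proof. by move=> x; rewrite -actionM mulgV action1. Qed.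

End Action.

Section SkewIdeals.
Variables (G : groupType) (R : pzRingType) (alpha : G -> {rmorphism R -> R}).
Implicit Types (a b : skew G R) (J : skew G R -> Prop) (I : R -> Prop).

Definition skew_coef_ideal I a : Prop := forall k, I (a k).

Definition skew_contraction J (r : R) : Prop := J (skew_monom r 1%g).

Lemma skew_coef_ideal_is_ideal I :
  is_ideal I -> G_invariant alpha I -> skew_is_ideal alpha (skew_coef_ideal I).
Proof.
case=> I0 ID IN IL IR invI.
have I_sum (s : seq G) F : (forall g, I (F g)) -> I (\sum_(g <- s) F g).
  by move=> IF; apply: big_ind.
split=> [k|a b Ia Ib k|a Ia k|a b Ib k|a b Ia k].
- by rewrite skew_zeroE.
- by rewrite skew_addE; apply: ID.
- by rewrite skew_oppE; apply: IN.
- by rewrite skew_mulE; apply: I_sum => g; apply/IL/invI.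
- by rewrite skew_mulE; apply: I_sum => g; apply: IR.
Qed.

Lemma skew_contraction_is_ideal J :
  is_action alpha -> skew_is_ideal alpha J -> is_ideal (skew_contraction J).
Proof.
move=> act [J0 JD JN JL JR]; rewrite /skew_contraction.
have monom_mul1 s t : skew_monom (s * t) 1%g =
    skew_mul alpha (skew_monom s 1%g) (skew_monom t 1%g).
  by rewrite skew_mul_monom action1 // mulg1.
split=> [|x y Jx Jy|x Jx|r x Jx|r x Jx].
- by rewrite skew_monom0.
- have -> : skew_monom (x + y) (1 : G)%g =
      skew_add (skew_monom x 1%g) (skew_monom y 1%g).
    apply/fsfunP => k; rewrite skew_addE !skew_monomE.
    by case: ifP; rewrite ?addr0.
  exact: JD.
- have -> : skew_monom (- x) (1 : G)%g = skew_opp (skew_monom x 1%g).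
    apply/fsfunP => k; rewrite skew_oppE !skew_monomE.
    by case: ifP; rewrite ?oppr0.
  exact: JN.
- by rewrite monom_mul1; apply: JL.
- by rewrite monom_mul1; apply: JR.
Qed.

Lemma skew_contraction_G_invariant J :
  skew_is_ideal alpha J -> G_invariant alpha (skew_contraction J).
Proof.
case=> _ _ _ JL JR g x Jx; rewrite /skew_contraction.
have -> : skew_monom (alpha g x) 1%g = skew_mul alpha
    (skew_mul alpha (skew_monom 1 g) (skew_monom x 1%g)) (skew_monom 1 g^-1).
  by rewrite !skew_mul_monom rmorph1 mulr1 mul1r mulg1 mulgV.
exact/JR/JL.
Qed.

Lemma skew_neq0_finsupp a : a != skew_zero G R -> exists h, h \in finsupp a.
Proof.
case: (fset_0Vmem (finsupp a)) => [a_empty|[h ha]] a_neq0; last by exists h.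
move/negP: a_neq0; case; apply/eqP/fsfunP => k.
by rewrite skew_zeroE fsfun_dflt // a_empty.
Qed.

End SkewIdeals.

Section NonzeroIdeals.
Variables (G : groupType) (R : pzRingType) (alpha : G -> {rmorphism R -> R}).
Hypotheses (act : is_action alpha) (regR : von_neumann_regular R).
Hypothesis outer : forall g : G, corner_inner (alpha g) -> g = 1%g.
Implicit Types (a b : skew G R) (J : skew G R -> Prop).

Lemma nonzero_intertwiner_eq1 g e u :
  e * e = e -> u != 0 -> e * u = u ->
  (forall x, x = e * x * e -> x * u = u * alpha g x) -> g = 1%g.
Proof.
move=> ee u_neq0 eu intertwine; apply/eqP; rewrite -invg_eq1; apply/eqP/outer.
exact: (corner_inner_of_corner_intertwiner (actionK act g) (actionVK act g)
  regR ee u_neq0 eu intertwine).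
Qed.

Definition skew_twisted_commutator b h (x : R) : skew G R :=
  skew_add (skew_mul alpha (skew_monom x 1%g) b)
           (skew_opp (skew_mul alpha b (skew_monom (alpha h^-1 x) 1%g))).

Lemma skew_twisted_commutatorE b h x k :
  skew_twisted_commutator b h x k = x * b k - b k * alpha (k * h^-1)%g x.
Proof.
rewrite skew_addE skew_oppE skew_mul_monoml skew_mul_monomr.
by rewrite invg1 mul1g mulg1 !action1 // actionM.
Qed.

Lemma skew_ideal_twisted_commutator J b h x :
  skew_is_ideal alpha J -> J b -> J (skew_twisted_commutator b h x).
Proof. by case=> _ JD JN JL JR Jb; apply/JD; [apply: JL | apply/JN/JR]. Qed.

Lemma skew_ideal_normalize J a h :
  skew_is_ideal alpha J -> J a -> h \in finsupp a ->
  exists b, [/\ J b, h \in finsupp b, b h * b h = b h,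
                forall k, b h * b k = b k & (finsupp b `<=` finsupp a)%fset].
Proof.
case=> _ _ _ JL _ Ja ha; have [x rxr] := regR (a h).
pose b := skew_mul alpha (skew_monom (x * a h * x) 1%g) a.
have bE k : b k = x * a h * x * a k.
  by rewrite skew_mul_monoml invg1 mul1g action1.
have ee : x * a h * (x * a h) = x * a h by rewrite -!mulrA (mulrA (a h)) -rxr.
have bh : b h = x * a h by rewrite bE -mulrA ee.
exists b; split.
- exact: JL.
- rewrite mem_finsupp bh; apply: contraTneq ha => e0.
  by rewrite mem_finsupp negbK rxr -mulrA e0 mulr0.
- by rewrite bh ee.
- by move=> k; rewrite bh !bE !mulrA -[x * a h * x * a h]mulrA ee.
- apply/fsubsetP => k; rewrite !mem_finsupp bE; apply: contraNneq => ->.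
  by rewrite mulr0.
Qed.

Lemma skew_ideal_shrink J b h :
  skew_is_ideal alpha J -> J b -> h \in finsupp b ->
  b h * b h = b h -> (forall k, b h * b k = b k) ->
  (exists2 e, e != 0 & J (skew_monom e 1%g)) \/
  (exists c,
     [/\ J c, c != skew_zero G R & (finsupp c `<=` finsupp b `\ h)%fset]).
Proof.
move=> idJ Jb hb ee eb; set e := b h in hb ee eb.
pose c := skew_twisted_commutator b h.
have [[x [xE cx_neq0]]|c_eq0] :=
  classic (exists x, x = e * x * e /\ c x != skew_zero G R).
  right; exists (c x); split=> //; first exact: skew_ideal_twisted_commutator.
  have xe : x * e = x by rewrite xE -mulrA ee.
  have ex : e * x = x by rewrite xE !mulrA ee.
  apply/fsubsetP => k; rewrite mem_finsupp skew_twisted_commutatorE in_fsetD1.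
  case: (eqVneq k h) => [->|_] /=.
    by rewrite mulgV action1 // -/e xe ex subrr eqxx.
  rewrite mem_finsupp; apply: contraNneq => ->.
  by rewrite mulr0 mul0r subrr eqxx.
left; exists e; first by rewrite -mem_finsupp.
have intertwine k x : x = e * x * e -> x * b k = b k * alpha (k * h^-1)%g x.
  move=> xE; have cx0 : c x = skew_zero G R.
    by apply/eqP/negPn/negP => cx_neq0; apply: c_eq0; exists x.
  by apply/eqP; rewrite -subr_eq0 -skew_twisted_commutatorE -/c cx0 skew_zeroE.
have bE : b = skew_monom e h.
  apply/fsfunP => k; rewrite skew_monomE; case: eqP => [->//|/eqP kh].
  apply/eqP; apply: contraNT kh => bk; rewrite -[h]invgK -mulg_eq1.
  exact/eqP/(nonzero_intertwiner_eq1 ee bk (eb k) (intertwine k)).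
have -> : skew_monom e 1%g = skew_mul alpha b (skew_monom 1 h^-1).
  by rewrite bE skew_mul_monom rmorph1 mulr1 mulgV.
by case: idJ => _ _ _ _ JR; apply: JR.
Qed.

Lemma skew_ideal_has_nonzero_scalar J a :
  skew_is_ideal alpha J -> J a -> a != skew_zero G R ->
  exists2 e, e != 0 & J (skew_monom e 1%g).
Proof.
move=> idJ; move: {2}#|` finsupp a| (leqnn #|` finsupp a|) => n.
elim: n a => [|n IH] a size_a Ja a_neq0;
  have [h ha] := skew_neq0_finsupp a_neq0.
  by move: size_a; rewrite (cardfsD1 h) ha.
have [b [Jb hb ee eb b_sub]] := skew_ideal_normalize idJ Ja ha.
case: (skew_ideal_shrink idJ Jb hb ee eb) => [//|[c [Jc c_neq0 c_sub]]].
apply: (IH c) => //; apply: leq_trans (fsubset_leq_card c_sub) _.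
move: (fsubset_leq_card b_sub) size_a; rewrite (cardfsD1 h (finsupp b)) hb.
by move=> /leq_trans le_a /le_a.
Qed.

End NonzeroIdeals.

Section Simplicity.
Variables (G : groupType) (R : pzRingType) (alpha : G -> {rmorphism R -> R}).

Lemma G_simple_of_skew_simple : skew_simple alpha -> G_simple alpha.
Proof.
case=> one_neq0 skew_ideals; split.
  by rewrite -(skew_monom_eq0 _ (1 : G)%g).
move=> I idI invI; have [I0 _ _ IL _] := idI.
case: (skew_ideals _ (skew_coef_ideal_is_ideal idI invI)) => [coef0|coefT].
  left=> x; split=> [Ix|->//]; apply/eqP; rewrite -(skew_monom_eq0 _ (1 : G)%g).
  by apply/eqP/coef0 => k; rewrite skew_monomE; case: ifP.
right=> x; rewrite -(mulr1 x); apply: IL.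
by have := coefT (skew_monom 1 1%g) 1%g; rewrite skew_monomE eqxx.
Qed.

Lemma skew_simple_of_G_simple :
  is_action alpha -> von_neumann_regular R ->
  (forall g : G, corner_inner (alpha g) -> g = 1%g) ->
  G_simple alpha -> skew_simple alpha.
Proof.
move=> act regR outer [one_neq0 G_ideals]; split.
  by rewrite -(skew_monom_eq0 _ (1 : G)%g) in one_neq0.
move=> J idJ; have [J0 _ _ JL _] := idJ.
have [[a Ja a_neq0]|J_eq0] := classic (exists2 a, J a & a != skew_zero G R).
  right; have [e e_neq0 Je] :=
    skew_ideal_has_nonzero_scalar act regR outer idJ Ja a_neq0.
  have [contr0|contrT] := G_ideals _ (skew_contraction_is_ideal act idJ)
    (skew_contraction_G_invariant idJ).
    by move/contr0/eqP: Je; rewrite (negPf e_neq0).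
  by move=> x; rewrite -(skew_mulr1 alpha x); apply/JL/contrT.
left=> x; split=> [Jx|->//]; apply/eqP/negPn/negP => x_neq0.
by apply: J_eq0; exists x.
Qed.

End Simplicity.

Theorem theorem2p8 (R : pzRingType) (G : groupType)
    (alpha : G -> {rmorphism R -> R}) :
  von_neumann_regular R ->
  is_action alpha ->
  (forall g : G, corner_inner (alpha g) -> g = 1%g) ->
  (skew_simple alpha <-> G_simple alpha).
Proof.
move=> regR act outer; split; first exact: G_simple_of_skew_simple.
exact: skew_simple_of_G_simple.
Qed.
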